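(* Let $X$ be a Tychonoff space and $AP(X)$ its free abelian precompact group. If $X$ is not reversible, then $AP(X)$ is not $g$-reversible.
   Context: All topological groups are assumed Hausdorff. A topological space $X$ is reversible if every continuous bijection of $X$ onto itself is open. A topological group $G$ is called $g$-reversible if every continuous automorphism of $G$ (i.e. every continuous group isomorphism of $G$ onto itself) is an open map. For a Tychonoff space $X$, the free abelian precompact group $AP(X)$ is the free abelian group on the set $X$ equipped with the initial group topology generated by all homomorphisms $AP(X)\to\mathbb{T}=\mathbb{R}/\mathbb{Z}$ whose restriction to $X$ is continuous; it is a Hausdorff precompact abelian group containing $X$ as a topological subspace, and every continuous map from $X$ into a precompact abelian group extends uniquely to a continuous homomorphism on $AP(X)$. *)

From Stdlib Require Import Reals Lra Lia ZArith List Classical ClassicalEpsilon.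
Open Scope R_scope.

Definition topology (X : Type) := (X -> Prop) -> Prop.

Definition is_topology {X : Type} (tau : topology X) : Prop :=
  tau (fun _ => True) /\
  (forall U V, tau U -> tau V -> tau (fun x => U x /\ V x)) /\
  (forall F : (X -> Prop) -> Prop, (forall U, F U -> tau U) ->
      tau (fun x => exists U, F U /\ U x)).

Definition continuous {X Y : Type} (tX : topology X) (tY : topology Y) (f : X -> Y) : Prop :=
  forall V, tY V -> tX (fun x => V (f x)).

Definition open_map {X Y : Type} (tX : topology X) (tY : topology Y) (f : X -> Y) : Prop :=
  forall U, tX U -> tY (fun y => exists x, U x /\ f x = y).

Definition bijective {X Y : Type} (f : X -> Y) : Prop :=
  (forall x1 x2, f x1 = f x2 -> x1 = x2) /\ (forall y, exists x, f x = y).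

Definition reversible {X : Type} (tX : topology X) : Prop :=
  forall f : X -> X, bijective f -> continuous tX tX f -> open_map tX tX f.

Definition continuous_R {X : Type} (tX : topology X) (f : X -> R) : Prop :=
  forall x eps, 0 < eps ->
    exists U, tX U /\ U x /\ forall y, U y -> Rabs (f y - f x) < eps.

Definition T1 {X : Type} (tX : topology X) : Prop :=
  forall x y : X, x <> y -> exists U, tX U /\ U x /\ ~ U y.

Definition completely_regular {X : Type} (tX : topology X) : Prop :=
  forall (F : X -> Prop) (x : X), tX (fun y => ~ F y) -> ~ F x ->
    exists f : X -> R, continuous_R tX f /\ f x = 0 /\ forall y, F y -> f y = 1.

Definition tychonoff {X : Type} (tX : topology X) : Prop :=
  is_topology tX /\ T1 tX /\ completely_regular tX.

(* Elements of T are represented by reals; s and t are eps-close in T iff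
   they are eps-close modulo an integer. *)
Definition nearT (s t eps : R) : Prop := exists z : Z, Rabs (s - t - IZR z) < eps.
Definition is_int (r : R) : Prop := exists z : Z, r = IZR z.

Definition continuous_T {X : Type} (tX : topology X) (f : X -> R) : Prop :=
  forall x eps, 0 < eps ->
    exists U, tX U /\ U x /\ forall y, U y -> nearT (f y) (f x) eps.

Definition finsupp {X : Type} (w : X -> Z) : Prop :=
  exists l : list X, forall x, w x <> 0%Z -> In x l.

Definition FA (X : Type) : Type := { w : X -> Z | finsupp w }.

Lemma finsupp_add {X : Type} (w1 w2 : X -> Z) :
  finsupp w1 -> finsupp w2 -> finsupp (fun x => (w1 x + w2 x)%Z).
Proof.
  intros [l1 H1] [l2 H2]; exists (l1 ++ l2); intros x Hx.
  apply in_or_app. destruct (Z.eq_dec (w1 x) 0) as [E|E].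
  - right; apply H2; lia.
  - left; apply H1; exact E.
Qed.

Lemma finsupp_opp {X : Type} (w : X -> Z) : finsupp w -> finsupp (fun x => (- w x)%Z).
Proof. intros [l H]; exists l; intros x Hx; apply H; lia. Qed.

Lemma finsupp_zero (X : Type) : finsupp (fun _ : X => 0%Z).
Proof. exists nil; intros x Hx; lia. Qed.

Definition FA_add {X : Type} (a b : FA X) : FA X :=
  exist _ (fun x => (proj1_sig a x + proj1_sig b x)%Z)
        (finsupp_add _ _ (proj2_sig a) (proj2_sig b)).
Definition FA_opp {X : Type} (a : FA X) : FA X :=
  exist _ (fun x => (- proj1_sig a x)%Z) (finsupp_opp _ (proj2_sig a)).
Definition FA_zero (X : Type) : FA X := exist _ (fun _ => 0%Z) (finsupp_zero X).

Lemma finsupp_delta {X : Type} (x : X) :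
  finsupp (fun y => if excluded_middle_informative (x = y) then 1%Z else 0%Z).
Proof.
  exists (x :: nil); intros y Hy.
  destruct (excluded_middle_informative (x = y)) as [E|E].
  - left; exact E.
  - lia.
Qed.

Definition delta {X : Type} (x : X) : FA X :=
  exist _ (fun y => if excluded_middle_informative (x = y) then 1%Z else 0%Z)
        (finsupp_delta x).

(* A homomorphism FA X -> T, represented as a map to R that is additive mod Z,
   whose restriction to X is continuous. *)
Definition ap_character {X : Type} (tX : topology X) (phi : FA X -> R) : Prop :=
  (forall a b, is_int (phi (FA_add a b) - phi a - phi b)) /\
  continuous_T tX (fun x => phi (delta x)).

(* The initial topology on FA X generated by all such characters:
   A is open iff every point of A has a basic neighbourhood
   { b | forall phi in l, phi b is eps-close to phi a in T } contained in A. *)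
Definition ap_topology {X : Type} (tX : topology X) : topology (FA X) :=
  fun A => forall a, A a ->
    exists (l : list (FA X -> R)) (eps : R),
      (forall phi, In phi l -> ap_character tX phi) /\ 0 < eps /\
      forall b, (forall phi, In phi l -> nearT (phi b) (phi a) eps) -> A b.

Definition group_automorphism {X : Type} (f : FA X -> FA X) : Prop :=
  (forall a b, f (FA_add a b) = FA_add (f a) (f b)) /\ bijective f.

Definition AP_g_reversible {X : Type} (tX : topology X) : Prop :=
  forall f : FA X -> FA X, group_automorphism f ->
    continuous (ap_topology tX) (ap_topology tX) f ->
    open_map (ap_topology tX) (ap_topology tX) f.

(* A bijection f of X induces an automorphism F of AP(X) extending f,
   continuous when f is, because characters of AP(X) composed with F are
   again characters.  Complete regularity makes X a
   topological subspace of AP(X): every open U of X is the trace of an open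
   set W of AP(X), obtained from characters that send a point of U to 0 and
   the complement of U to 1/2.  Then f(U) is the trace of F(W), so if F is
   open so is f; hence g-reversibility of AP(X) forces reversibility of X. *)

From Stdlib Require Import Reals List.
From Stdlib Require Import Lra Lia ZArith Classical ClassicalEpsilon.
From Stdlib Require Import FunctionalExtensionality PropExtensionality.
From Stdlib Require Import ProofIrrelevance Permutation.
Open Scope R_scope.

Lemma FA_eq {X : Type} (a b : FA X) :
  (forall x, proj1_sig a x = proj1_sig b x) -> a = b.
Proof.
  destruct a as [a Ha], b as [b Hb]; simpl; intros H.
  assert (a = b) by (apply functional_extensionality; exact H); subst b.
  f_equal; apply proof_irrelevance.
Qed.

Lemma open_of_locally_open {X : Type} (tX : topology X) (A : X -> Prop) :
  is_topology tX ->
  (forall x, A x -> exists O, tX O /\ O x /\ forall y, O y -> A y) -> tX A.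
Proof.
  intros [_ [_ Hunion]] Hloc.
  replace A with (fun y => exists O, (tX O /\ forall z, O z -> A z) /\ O y).
  - apply Hunion; intros O [HO _]; exact HO.
  - apply functional_extensionality; intros y; apply propositional_extensionality.
    split.
    + intros [O [[_ HOA] Oy]]; auto.
    + intros Ay; destruct (Hloc y Ay) as [O [HO [Oy HOA]]]; exists O; auto.
Qed.

Fixpoint weighted_sum {X : Type} (h : X -> R) (w : X -> Z) (l : list X) : R :=
  match l with
  | nil => 0
  | x :: l' => IZR (w x) * h x + weighted_sum h w l'
  end.

Lemma weighted_sum_filter_nonzero {X : Type} (h : X -> R) (w : X -> Z) l :
  weighted_sum h w l =
  weighted_sum h w (filter (fun x => if Z.eq_dec (w x) 0 then false else true) l).
Proof.
  induction l as [|x l IH]; simpl; auto.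
  destruct (Z.eq_dec (w x) 0) as [E|E]; simpl; rewrite IH; auto.
  rewrite E; simpl; ring.
Qed.

Lemma weighted_sum_perm {X : Type} (h : X -> R) (w : X -> Z) l1 l2 :
  Permutation l1 l2 -> weighted_sum h w l1 = weighted_sum h w l2.
Proof. induction 1; simpl; lra. Qed.

Lemma weighted_sum_support_indep {X : Type} (h : X -> R) (w : X -> Z) l1 l2 :
  NoDup l1 -> NoDup l2 ->
  (forall x, w x <> 0%Z -> In x l1) -> (forall x, w x <> 0%Z -> In x l2) ->
  weighted_sum h w l1 = weighted_sum h w l2.
Proof.
  intros N1 N2 C1 C2.
  rewrite (weighted_sum_filter_nonzero h w l1), (weighted_sum_filter_nonzero h w l2).
  apply weighted_sum_perm, NoDup_Permutation; try (apply NoDup_filter; assumption).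
  intros x; rewrite !filter_In.
  destruct (Z.eq_dec (w x) 0); split; intros [_ H]; try discriminate; auto.
Qed.

Lemma weighted_sum_add {X : Type} (h : X -> R) (a b : X -> Z) l :
  weighted_sum h (fun x => (a x + b x)%Z) l = weighted_sum h a l + weighted_sum h b l.
Proof. induction l; simpl; [ring|]. rewrite plus_IZR, IHl; ring. Qed.

Definition support_list {X : Type} (a : FA X) : list X :=
  nodup (fun x y => excluded_middle_informative (x = y))
    (proj1_sig (constructive_indefinite_description _ (proj2_sig a))).

Lemma support_list_NoDup {X : Type} (a : FA X) : NoDup (support_list a).
Proof. apply NoDup_nodup. Qed.

Lemma support_list_complete {X : Type} (a : FA X) x :
  proj1_sig a x <> 0%Z -> In x (support_list a).
Proof.
  intros Hx; apply nodup_In.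
  exact (proj2_sig (constructive_indefinite_description _ (proj2_sig a)) x Hx).
Qed.

Definition FA_eval {X : Type} (h : X -> R) (a : FA X) : R :=
  weighted_sum h (proj1_sig a) (support_list a).

Lemma FA_eval_add {X : Type} (h : X -> R) a b :
  FA_eval h (FA_add a b) = FA_eval h a + FA_eval h b.
Proof.
  set (l := nodup (fun x y => excluded_middle_informative (x = y))
                  (support_list a ++ support_list b)).
  assert (Hl : NoDup l) by apply NoDup_nodup.
  unfold FA_eval.
  rewrite (weighted_sum_support_indep h _ (support_list (FA_add a b)) l),
          (weighted_sum_support_indep h _ (support_list a) l),
          (weighted_sum_support_indep h _ (support_list b) l);
    auto using support_list_NoDup, support_list_complete.
  - apply weighted_sum_add.
  - intros x Hx; apply nodup_In, in_or_app; right; apply support_list_complete; auto.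
  - intros x Hx; apply nodup_In, in_or_app; left; apply support_list_complete; auto.
  - intros x Hx; apply nodup_In, in_or_app; simpl in Hx.
    destruct (Z.eq_dec (proj1_sig a x) 0).
    + right; apply support_list_complete; lia.
    + left; apply support_list_complete; auto.
Qed.

Lemma FA_eval_delta {X : Type} (h : X -> R) y : FA_eval h (delta y) = h y.
Proof.
  unfold FA_eval.
  rewrite (weighted_sum_support_indep h _ _ (y :: nil));
    auto using support_list_NoDup, support_list_complete.
  - simpl; destruct (excluded_middle_informative (y = y)); [ring | congruence].
  - repeat constructor; simpl; tauto.
  - intros x Hx; simpl in Hx.
    destruct (excluded_middle_informative (y = x)); [left; auto | lia].
Qed.

Lemma ap_character_FA_eval {X : Type} (tX : topology X) (h : X -> R) :
  continuous_T tX h -> ap_character tX (FA_eval h).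
Proof.
  intros Hh; split.
  - intros a b; exists 0%Z; rewrite FA_eval_add; simpl; ring.
  - intros x eps He; destruct (Hh x eps He) as [U [HU [Ux HUy]]].
    exists U; repeat split; auto.
    intros y Uy; rewrite !FA_eval_delta; auto.
Qed.

Lemma ap_open_nearT {X : Type} (tX : topology X) (phi : FA X -> R) c eps :
  ap_character tX phi -> ap_topology tX (fun b => nearT (phi b) c eps).
Proof.
  intros Hphi a [z Hz].
  exists (phi :: nil), (eps - Rabs (phi a - c - IZR z)).
  split; [intros p [<-|[]]; exact Hphi|]. split; [lra|].
  intros b Hb; destruct (Hb phi (or_introl eq_refl)) as [z' Hz'].
  exists (z + z')%Z; rewrite plus_IZR.
  replace (phi b - c - (IZR z + IZR z'))
    with ((phi b - phi a - IZR z') + (phi a - c - IZR z)) by ring.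
  eapply Rle_lt_trans; [apply Rabs_triang|]. lra.
Qed.

Lemma characters_near_on_open {X : Type} (tX : topology X) l x eps :
  is_topology tX -> 0 < eps -> (forall phi, In phi l -> ap_character tX phi) ->
  exists O, tX O /\ O x /\ forall y, O y -> forall phi, In phi l ->
    nearT (phi (delta y)) (phi (delta x)) eps.
Proof.
  intros [Htop [Hinter _]] He.
  induction l as [|p l IH]; intros Hl.
  - exists (fun _ => True); split; [exact Htop|]; split; [exact I|].
    intros y _ phi [].
  - destruct IH as [O [HO [Ox HOy]]]; [intros; apply Hl; right; auto|].
    destruct (proj2 (Hl p (or_introl eq_refl)) x eps He) as [U [HU [Ux HUy]]].
    exists (fun y => U y /\ O y); repeat split; auto.
    intros y [Uy Oy] phi [<-|Hin]; auto.
Qed.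

Lemma delta_continuous {X : Type} (tX : topology X) :
  is_topology tX -> continuous tX (ap_topology tX) delta.
Proof.
  intros Htop W HW; apply open_of_locally_open; auto.
  intros x Wx; destruct (HW _ Wx) as [l [eps [Hc [He Hb]]]].
  destruct (characters_near_on_open tX l x eps Htop He Hc) as [O [HO [Ox HOy]]].
  exists O; repeat split; auto.
Qed.

Lemma continuous_R_T {X : Type} (tX : topology X) (f : X -> R) :
  continuous_R tX f -> continuous_T tX f.
Proof.
  intros Hf x eps He; destruct (Hf x eps He) as [U [HU [Ux HUy]]].
  exists U; repeat split; auto.
  intros y Uy; exists 0%Z; rewrite Rminus_0_r; auto.
Qed.

Lemma continuous_R_half {X : Type} (tX : topology X) (f : X -> R) :
  continuous_R tX f -> continuous_R tX (fun y => f y / 2).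
Proof.
  intros Hf x eps He; destruct (Hf x (2 * eps)) as [U [HU [Ux HUy]]]; [lra|].
  exists U; repeat split; auto.
  intros y Uy; specialize (HUy y Uy).
  revert HUy; unfold Rabs; do 2 destruct Rcase_abs; lra.
Qed.

Lemma not_nearT_half_0 : ~ nearT (1 / 2) 0 (1 / 4).
Proof.
  intros [z Hz]; rewrite Rminus_0_r in Hz.
  destruct (Z_le_gt_dec z 0) as [Hz0|Hz0].
  - apply IZR_le in Hz0; revert Hz; unfold Rabs; destruct Rcase_abs; lra.
  - assert (Hz1 : (1 <= z)%Z) by lia; apply IZR_le in Hz1.
    revert Hz; unfold Rabs; destruct Rcase_abs; lra.
Qed.

(* The character separating x from the closed set ~ U is the Urysohn function
   halved, so that its two values 0 and 1/2 stay apart in T = R/Z. *)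
Lemma ap_nbhs_of_delta_in_open {X : Type} (tX : topology X) (U : X -> Prop) x :
  completely_regular tX -> tX U -> U x ->
  exists V, ap_topology tX V /\ V (delta x) /\ forall y, V (delta y) -> U y.
Proof.
  intros Hcr HU Ux.
  destruct (Hcr (fun y => ~ U y) x) as [h [Hhc [Hhx Hh1]]]; auto.
  { replace (fun y => ~ ~ U y) with U; auto.
    apply functional_extensionality; intros y; apply propositional_extensionality.
    split; [auto | apply NNPP]. }
  set (phi := FA_eval (fun y => h y / 2)).
  assert (Hphi : ap_character tX phi)
    by apply ap_character_FA_eval, continuous_R_T, continuous_R_half, Hhc.
  exists (fun b => nearT (phi b) (phi (delta x)) (1 / 4)).
  split; [apply ap_open_nearT, Hphi|]. split.
  - exists 0%Z; rewrite Rminus_diag, Rminus_0_r, Rabs_R0; lra.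
  - intros y Hy; apply NNPP; intros nUy; apply not_nearT_half_0.
    unfold phi in Hy; rewrite !FA_eval_delta, Hhx, Hh1 in Hy by exact nUy.
    replace (0 / 2) with 0 in Hy by field; exact Hy.
Qed.

Lemma ap_open_trace {X : Type} (tX : topology X) (U : X -> Prop) :
  completely_regular tX -> tX U ->
  exists W, ap_topology tX W /\ forall y, W (delta y) <-> U y.
Proof.
  intros Hcr HU.
  exists (fun b => exists V, ap_topology tX V /\ V b /\ forall y, V (delta y) -> U y).
  split.
  - intros b [V [HV [Vb HVU]]]; destruct (HV b Vb) as [l [eps [Hl [He Hnear]]]].
    exists l, eps; split; [exact Hl|]; split; [exact He|].
    intros c Hc; exists V; auto.
  - intros y; split.
    + intros [V [_ [Vy HVU]]]; auto.
    + intros Uy; exact (ap_nbhs_of_delta_in_open tX U y Hcr HU Uy).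
Qed.

Lemma ap_continuous_of_characters {X Y : Type} (tX : topology X) (tY : topology Y)
    (F : FA X -> FA Y) :
  (forall phi, ap_character tY phi -> ap_character tX (fun a => phi (F a))) ->
  continuous (ap_topology tX) (ap_topology tY) F.
Proof.
  intros HF V HV a Va; destruct (HV _ Va) as [l [eps [Hc [He Hb]]]].
  exists (map (fun phi a => phi (F a)) l), eps; split; [|split; [exact He|]].
  - intros psi Hin; apply in_map_iff in Hin; destruct Hin as [phi [<- Hphi]]; auto.
  - intros b Hb'; apply Hb; intros phi Hphi.
    apply (Hb' (fun a => phi (F a))), in_map_iff; exists phi; auto.
Qed.

(* f(U) is the trace on Y of F(W), where W traces U on X. *)
Lemma open_map_of_ap_extension {X Y : Type} (tX : topology X) (tY : topology Y)
    (f : X -> Y) (F : FA X -> FA Y) :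
  is_topology tY -> completely_regular tX ->
  (forall y, exists x, f x = y) -> (forall a b, F a = F b -> a = b) ->
  (forall x, F (delta x) = delta (f x)) ->
  open_map (ap_topology tX) (ap_topology tY) F -> open_map tX tY f.
Proof.
  intros HtopY Hcr Hsurj Hinj HFdelta HFopen U HU.
  destruct (ap_open_trace tX U Hcr HU) as [W [HW HWU]].
  replace (fun y => exists x, U x /\ f x = y)
    with (fun y => exists b, W b /\ F b = delta y).
  - exact (delta_continuous tY HtopY _ (HFopen W HW)).
  - apply functional_extensionality; intros y; apply propositional_extensionality.
    split.
    + intros [b [Wb Fb]]; destruct (Hsurj y) as [x <-].
      assert (b = delta x) as -> by (apply Hinj; rewrite Fb; auto).
      exists x; split; [apply HWU|]; auto.
    + intros [x [Ux <-]]; exists (delta x); split; [apply HWU|]; auto.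
Qed.

Lemma bijective_inverse {X Y : Type} (f : X -> Y) :
  bijective f -> {g : Y -> X | (forall y, f (g y) = y) /\ (forall x, g (f x) = x)}.
Proof.
  intros [Hinj Hsurj].
  exists (fun y => proj1_sig (constructive_indefinite_description _ (Hsurj y))).
  split.
  - intros y; exact (proj2_sig (constructive_indefinite_description _ (Hsurj y))).
  - intros x; apply Hinj.
    exact (proj2_sig (constructive_indefinite_description _ (Hsurj (f x)))).
Qed.

Section FAMap.

Variables (X Y : Type) (f : X -> Y) (g : Y -> X).
Hypothesis f_g : forall y, f (g y) = y.

Lemma finsupp_comp_section (w : X -> Z) : finsupp w -> finsupp (fun y => w (g y)).
Proof.
  intros [l Hl]; exists (map f l); intros y Hy.
  rewrite <- (f_g y); apply in_map; auto.
Qed.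

(* For bijective f with inverse g, precomposing a word with g is its image
   under f. *)
Definition FA_map (a : FA X) : FA Y :=
  exist _ (fun y => proj1_sig a (g y)) (finsupp_comp_section _ (proj2_sig a)).

Lemma FA_map_add a b : FA_map (FA_add a b) = FA_add (FA_map a) (FA_map b).
Proof. apply FA_eq; reflexivity. Qed.

Hypothesis g_f : forall x, g (f x) = x.

Lemma FA_map_delta x : FA_map (delta x) = delta (f x).
Proof.
  apply FA_eq; intros y; simpl.
  destruct (excluded_middle_informative (x = g y)) as [e1|n1],
           (excluded_middle_informative (f x = y)) as [e2|n2]; auto; exfalso.
  - subst x; auto.
  - subst y; auto.
Qed.

Lemma FA_map_inj a b : FA_map a = FA_map b -> a = b.
Proof.
  intros H; apply FA_eq; intros x.
  pose proof (f_equal (fun c => proj1_sig c (f x)) H) as Hx; simpl in Hx.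
  rewrite g_f in Hx; exact Hx.
Qed.

Lemma ap_character_comp_FA_map (tX : topology X) (tY : topology Y) phi :
  continuous tX tY f -> ap_character tY phi ->
  ap_character tX (fun a => phi (FA_map a)).
Proof.
  intros Hf [Hadd Hcont]; split.
  - intros a b; rewrite FA_map_add; apply Hadd.
  - intros x eps He; destruct (Hcont (f x) eps He) as [U [HU [Ux HUy]]].
    exists (fun y => U (f y)); repeat split; auto.
    intros y Uy; rewrite !FA_map_delta; auto.
Qed.

End FAMap.

Lemma FA_map_surj {X Y : Type} (f : X -> Y) (g : Y -> X)
    (f_g : forall y, f (g y) = y) (g_f : forall x, g (f x) = x) b :
  exists a, FA_map X Y f g f_g a = b.
Proof.
  exists (FA_map Y X g f g_f b); apply FA_eq; intros y; simpl.
  rewrite f_g; reflexivity.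
Qed.

Theorem theorem6p2 (X : Type) (tX : topology X) :
  tychonoff tX -> ~ reversible tX -> ~ AP_g_reversible tX.
Proof.
  intros [Htop [_ Hcr]] Hnrev Hgrev; apply Hnrev.
  intros f Hbij Hf.
  destruct (bijective_inverse f Hbij) as [g [f_g g_f]].
  set (F := FA_map X X f g f_g).
  apply (open_map_of_ap_extension tX tX f F Htop Hcr (proj2 Hbij)
           (FA_map_inj X X f g f_g g_f) (FA_map_delta X X f g f_g g_f)).
  apply Hgrev.
  - split; [apply FA_map_add|].
    split; [apply FA_map_inj, g_f | apply FA_map_surj, g_f].
  - apply ap_continuous_of_characters; intros phi Hphi.
    apply (ap_character_comp_FA_map X X f g f_g g_f tX tX); auto.
Qed.
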